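(* Let $\mathcal C$ be a convex curve whose radius of curvature satisfies $\rho\ge R_1$ at every point, for some constant $R_1>0$, and whose total curvature satisfies $\int_{\mathcal C}\kappa\,ds\le \pi$. Let $\mathcal L$ be a lattice in $\mathbb R^2$. If $$\frac{\mathrm{Length}(\mathcal C)}{(A_{\mathcal L} R_1)^{1/3}}\le 2,$$ then $\mathcal C$ contains at most two points of $\mathcal L$.
   Context: A lattice is a set $\mathcal L=\mathcal L(v_0,v_1,v_2)=\{v_0+mv_1+nv_2: m,n\in\mathbb Z\}$ where $v_0,v_1,v_2\in\mathbb R^2$ and $v_1,v_2$ are linearly independent (points need not have integer coordinates). Its invariant is $A_{\mathcal L}=|\det(v_1,v_2)|$, the absolute value of the determinant of the $2\times2$ matrix with columns $v_1,v_2$. All curves are of class $C^2$ with nonvanishing first and second derivative vectors, oriented so that the curvature $\kappa$ is positive; a convex curve is such a curve (lying on the boundary of a convex planar region). The radius of curvature is $\rho=1/\kappa$, $s$ is arclength, and the total curvature of $\mathcal C$ is $\int_{\mathcal C}\kappa\,ds$, the total change of the tangent angle along $\mathcal C$. *)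

From Stdlib Require Import Reals ZArith.
From Coquelicot Require Import Coquelicot.
Open Scope R_scope.

Definition pt := (R * R)%type.

Definition in_lattice (v0 v1 v2 : pt) (p : pt) : Prop :=
  exists m n : Z,
    fst p = fst v0 + IZR m * fst v1 + IZR n * fst v2 /\
    snd p = snd v0 + IZR m * snd v1 + IZR n * snd v2.

Definition det2 (v1 v2 : pt) : R := fst v1 * snd v2 - snd v1 * fst v2.

Definition lattice_invariant (v1 v2 : pt) : R := Rabs (det2 v1 v2).

(* A curve is given by coordinate functions x, y : R -> R, parameter t in [a,b]. *)
Definition speed (x y : R -> R) (t : R) : R :=
  sqrt (Derive x t ^ 2 + Derive y t ^ 2).

Definition curvature (x y : R -> R) (t : R) : R :=
  (Derive x t * Derive_n y 2 t - Derive y t * Derive_n x 2 t) / (speed x y t ^ 3).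

Definition curve_length (x y : R -> R) (a b : R) : R := RInt (speed x y) a b.

Definition total_curvature (x y : R -> R) (a b : R) : R :=
  RInt (fun t => curvature x y t * speed x y t) a b.

(* C^2 regularity of a real function (on all of R; any C^2 function on [a,b]
   extends to a C^2 function on R). *)
Definition C2 (f : R -> R) : Prop :=
  forall t, ex_derive f t /\ ex_derive (Derive f) t /\ continuous (Derive_n f 2) t.

Definition convex_set (K : pt -> Prop) : Prop :=
  forall p q : pt, K p -> K q -> forall l : R, 0 <= l <= 1 ->
    K ((1 - l) * fst p + l * fst q, (1 - l) * snd p + l * snd q).

Definition interior_pt (K : pt -> Prop) (p : pt) : Prop :=
  exists eps : R, 0 < eps /\ forall q : pt,
    (fst q - fst p) ^ 2 + (snd q - snd p) ^ 2 < eps ^ 2 -> K q.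

Definition on_convex_boundary (x y : R -> R) (a b : R) : Prop :=
  exists K : pt -> Prop, convex_set K /\
    (forall t, a <= t <= b -> K (x t, y t)) /\
    (forall t, a <= t <= b -> ~ interior_pt K (x t, y t)).

From Stdlib Require Import Reals ZArith Lra Psatz Classical.
From Coquelicot Require Import Coquelicot.
Open Scope R_scope.

(* Let theta be the tangent angle and s the arclength.  Since kappa > 0, theta increases, by
   at most PI in total and by at most (s v - s w) / R1 between w and v, so the tangents at w
   and v have cross product at most |sin (theta v - theta w)| < (s v - s w) / R1 times the
   speeds.  Integrating twice, three points of the curve met in this order, separated by arcs
   of lengths A and B, span a triangle with |det (P2 - P1, P3 - P2)| < A B (A + B) / (2 R1)
   <= L^3 / (8 R1) <= A_L.  The determinant is nonzero, since between the two chords the tangent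
   turns by an angle strictly between 0 and PI; but for lattice points it is an integer
   multiple of det (v1, v2), hence at least A_L in absolute value. *)

Lemma is_derive_eq (f : R -> R) (t l l' : R) : is_derive f t l -> l = l' -> is_derive f t l'.
Proof. now intros H <-. Qed.

(* Coquelicot states its differentiation rules with the operations of an abstract ring;
   restated over R they produce derivatives on which [ring] and [field] work. *)

Lemma is_derive_Rconst (c t : R) : is_derive (fun _ => c) t 0.
Proof. exact (is_derive_const c t). Qed.

Lemma is_derive_Rplus (f g : R -> R) (t df dg : R) :
  is_derive f t df -> is_derive g t dg -> is_derive (fun u => f u + g u) t (df + dg).
Proof. exact (is_derive_plus f g t df dg). Qed.

Lemma is_derive_Rminus (f g : R -> R) (t df dg : R) :
  is_derive f t df -> is_derive g t dg -> is_derive (fun u => f u - g u) t (df - dg).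
Proof. exact (is_derive_minus f g t df dg). Qed.

Lemma is_derive_Rmult (f g : R -> R) (t df dg : R) :
  is_derive f t df -> is_derive g t dg ->
  is_derive (fun u => f u * g u) t (df * g t + f t * dg).
Proof. intros Hf Hg. exact (is_derive_mult f g t df dg Hf Hg Rmult_comm). Qed.

Lemma is_derive_Rcomp (f g : R -> R) (t df dg : R) :
  is_derive f (g t) df -> is_derive g t dg -> is_derive (fun u => f (g u)) t (dg * df).
Proof. exact (is_derive_comp f g t df dg). Qed.

Lemma is_derive_affine_det (f g : R -> R) (p q r s t df dg : R) :
  is_derive f t df -> is_derive g t dg ->
  is_derive (fun u => (f u - p) * q - (g u - r) * s) t (df * q - dg * s).
Proof.
  intros Hf Hg. eapply is_derive_eq.
  - apply is_derive_Rminus; apply is_derive_Rmult.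
    + apply is_derive_Rminus; [exact Hf | apply is_derive_Rconst].
    + apply is_derive_Rconst.
    + apply is_derive_Rminus; [exact Hg | apply is_derive_Rconst].
    + apply is_derive_Rconst.
  - cbv beta. ring.
Qed.

Lemma MVT_is_derive (f df : R -> R) (u v : R) : u < v ->
  (forall t, u <= t <= v -> is_derive f t (df t)) ->
  exists c, u < c < v /\ f v - f u = df c * (v - u).
Proof.
  intros Huv Hf.
  destruct (MVT_cor2 f df u v Huv) as [c [E Hc]]; [intros; now apply is_derive_Reals, Hf |].
  now exists c.
Qed.

Lemma is_derive_0_eq (f : R -> R) (u v : R) : u <= v ->
  (forall t, u <= t <= v -> is_derive f t 0) -> f v = f u.
Proof.
  intros Huv Hf. destruct (Req_dec u v) as [<- | Hne]; [reflexivity |].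
  destruct (MVT_is_derive f (fun _ => 0) u v) as [c [_ E]]; [lra | assumption | lra].
Qed.

Lemma sub_le_sub_of_is_derive (f df g dg : R -> R) (u v : R) : u <= v ->
  (forall t, u <= t <= v -> is_derive f t (df t)) ->
  (forall t, u <= t <= v -> is_derive g t (dg t)) ->
  (forall t, u < t < v -> df t <= dg t) ->
  f v - f u <= g v - g u.
Proof.
  intros Huv Hf Hg Hle. destruct (Req_dec u v) as [<- | Hne]; [lra |].
  destruct (MVT_is_derive (fun t => g t - f t) (fun t => dg t - df t) u v) as [c [Hc E]];
    [lra | intros; apply is_derive_Rminus; auto |].
  specialize (Hle c Hc). nra.
Qed.

Lemma Rabs_sub_lt_sub_of_is_derive (f df F dF : R -> R) (u v : R) : u < v ->
  (forall t, u <= t <= v -> is_derive f t (df t)) ->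
  (forall t, u <= t <= v -> is_derive F t (dF t)) ->
  (forall t, u < t < v -> Rabs (df t) < dF t) ->
  Rabs (f v - f u) < F v - F u.
Proof.
  intros Huv Hf HF Hlt.
  destruct (MVT_is_derive (fun t => F t - f t) (fun t => dF t - df t) u v) as [c [Hc E]];
    [lra | intros; apply is_derive_Rminus; auto |].
  destruct (MVT_is_derive (fun t => F t + f t) (fun t => dF t + df t) u v) as [c' [Hc' E']];
    [lra | intros; apply is_derive_Rplus; auto |].
  destruct (Rabs_def2 _ _ (Hlt c Hc)), (Rabs_def2 _ _ (Hlt c' Hc')).
  apply Rabs_def1; nra.
Qed.

Lemma continuous_pow_comp (f : R -> R) (n : nat) (t : R) :
  continuous f t -> continuous (fun u => f u ^ n) t.
Proof.
  intros Hf. induction n as [| n IH]; simpl.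
  - apply continuous_const.
  - exact (continuous_mult f (fun u => f u ^ n) t Hf IH).
Qed.

Lemma is_derive_RInt_continuous (f : R -> R) (a t : R) :
  (forall u, continuous f u) -> is_derive (fun v => RInt f a v) t (f t).
Proof.
  intros Hf. apply (is_derive_RInt f (fun v => RInt f a v) a t); [| apply Hf].
  apply filter_forall. intros u. apply (RInt_correct f a u), ex_RInt_continuous. auto.
Qed.

Definition clamp (a b t : R) : R := Rmax a (Rmin b t).

Lemma clamp_id (a b t : R) : a <= t <= b -> clamp a b t = t.
Proof. intros; unfold clamp, Rmax, Rmin; repeat destruct Rle_dec; lra. Qed.

Lemma clamp_in (a b t : R) : a <= b -> a <= clamp a b t <= b.
Proof. intros; unfold clamp, Rmax, Rmin; repeat destruct Rle_dec; lra. Qed.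

Lemma continuous_clamp (a b t : R) : continuous (clamp a b) t.
Proof.
  apply continuity_pt_filterlim. intros eps Heps. exists eps. split; [exact Heps |].
  intros u [_ Hu]. simpl in *. unfold R_dist in *. eapply Rle_lt_trans; [| exact Hu].
  unfold clamp, Rmax, Rmin; repeat destruct Rle_dec; unfold Rabs; repeat destruct Rcase_abs; lra.
Qed.

Lemma continuous_clamp_comp (f : R -> R) (a b : R) : a <= b ->
  (forall t, a <= t <= b -> continuous f t) -> forall t, continuous (fun u => f (clamp a b u)) t.
Proof.
  intros Hab Hf t. apply (continuous_comp (clamp a b) f); [apply continuous_clamp |].
  now apply Hf, clamp_in.
Qed.

Section C2_facts.
Variable f : R -> R.
Hypothesis Hf : C2 f.

Lemma C2_is_derive t : is_derive f t (Derive f t).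
Proof. exact (Derive_correct _ _ (proj1 (Hf t))). Qed.

Lemma C2_is_derive_Derive t : is_derive (Derive f) t (Derive_n f 2 t).
Proof. exact (Derive_correct _ _ (proj1 (proj2 (Hf t)))). Qed.

Lemma C2_continuous_Derive t : continuous (Derive f) t.
Proof. exact (ex_derive_continuous _ _ (proj1 (proj2 (Hf t)))). Qed.

End C2_facts.

Lemma Rabs_sin_lt (d : R) : 0 < d -> Rabs (sin d) < d.
Proof.
  intros Hd. destruct (Rlt_or_le d PI) as [HPI | HPI].
  - rewrite Rabs_right by (left; apply sin_gt_0; lra). now apply sin_lt_x.
  - pose proof (SIN_bound d). pose proof PI2_1. apply Rabs_def1; lra.
Qed.

Lemma det2_eq0_of_parallel (u w d : pt) :
  d <> (0, 0) -> det2 u d = 0 -> det2 w d = 0 -> det2 u w = 0.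
Proof.
  destruct u as [ux uy], w as [wx wy], d as [dx dy]. unfold det2; simpl. intros Hd Hu Hw.
  assert (Ex : (ux * wy - uy * wx) * dx = wx * (ux * dy - uy * dx) - ux * (wx * dy - wy * dx))
    by ring.
  assert (Ey : (ux * wy - uy * wx) * dy = wy * (ux * dy - uy * dx) - uy * (wx * dy - wy * dx))
    by ring.
  rewrite Hu, Hw in Ex, Ey.
  destruct (Req_dec dx 0) as [Hx | Hx]; [destruct (Req_dec dy 0) as [Hy | Hy] |].
  - now subst.
  - apply (Rmult_eq_reg_r dy); lra.
  - apply (Rmult_eq_reg_r dx); lra.
Qed.

Definition vsub (p q : pt) : pt := (fst p - fst q, snd p - snd q).

Definition twice_area (p q r : pt) : R := Rabs (det2 (vsub q p) (vsub r q)).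

Lemma twice_area_swap12 (p q r : pt) : twice_area p q r = twice_area q p r.
Proof.
  unfold twice_area. rewrite <- Rabs_Ropp. f_equal. unfold det2, vsub; simpl. ring.
Qed.

Lemma twice_area_swap23 (p q r : pt) : twice_area p q r = twice_area p r q.
Proof.
  unfold twice_area. rewrite <- Rabs_Ropp. f_equal. unfold det2, vsub; simpl. ring.
Qed.

Lemma det2_vsub_lattice (v0 v1 v2 p q r : pt) :
  in_lattice v0 v1 v2 p -> in_lattice v0 v1 v2 q -> in_lattice v0 v1 v2 r ->
  exists z : Z, det2 (vsub q p) (vsub r q) = IZR z * det2 v1 v2.
Proof.
  intros [m1 [n1 [Xp Yp]]] [m2 [n2 [Xq Yq]]] [m3 [n3 [Xr Yr]]].
  exists ((m2 - m1) * (n3 - n2) - (n2 - n1) * (m3 - m2))%Z.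
  unfold det2, vsub; simpl. rewrite Xp, Yp, Xq, Yq, Xr, Yr.
  rewrite minus_IZR, !mult_IZR, !minus_IZR. ring.
Qed.

Lemma lattice_invariant_le_twice_area (v0 v1 v2 p q r : pt) :
  in_lattice v0 v1 v2 p -> in_lattice v0 v1 v2 q -> in_lattice v0 v1 v2 r ->
  0 < twice_area p q r -> lattice_invariant v1 v2 <= twice_area p q r.
Proof.
  intros Hp Hq Hr Hpos. destruct (det2_vsub_lattice v0 v1 v2 p q r Hp Hq Hr) as [z Ez].
  unfold twice_area, lattice_invariant in *. rewrite Ez, Rabs_mult in *.
  assert (Hz : z <> 0%Z) by (intros ->; rewrite Rabs_R0 in Hpos; lra).
  assert (1 <= Rabs (IZR z)) by (rewrite <- abs_IZR; apply IZR_le; lia).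
  pose proof (Rabs_pos (det2 v1 v2)). nra.
Qed.

Lemma sym3_of_sorted (P : R -> R -> R -> Prop) :
  (forall u v w, P u v w -> P v u w) -> (forall u v w, P u v w -> P u w v) ->
  (forall u v w, u < v < w -> P u v w) ->
  forall u v w, u <> v -> u <> w -> v <> w -> P u v w.
Proof.
  intros S12 S23 Hsorted u v w Huv Huw Hvw.
  destruct (Rlt_or_le u v), (Rlt_or_le v w), (Rlt_or_le u w).
  all: first [ lra
             | apply Hsorted; lra
             | apply S23, Hsorted; lra
             | apply S12, Hsorted; lra
             | apply S12, S23, Hsorted; lra
             | apply S23, S12, Hsorted; lra
             | apply S12, S23, S12, Hsorted; lra ].
Qed.

Lemma cube_le_of_div_Rpower_le (c L k : R) : 0 < c -> 0 <= L ->
  L / Rpower c (1 / 3) <= k -> L ^ 3 <= k ^ 3 * c.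
Proof.
  intros Hc HL Hk. set (r := Rpower c (1 / 3)) in Hk.
  assert (Hr : 0 < r) by apply exp_pos.
  assert (Hr3 : r ^ 3 = c).
  { unfold r. rewrite <- Rpower_pow by apply exp_pos. rewrite Rpower_mult.
    replace (1 / 3 * INR 3) with 1 by (simpl; field). apply Rpower_1, Hc. }
  assert (HLk : L <= k * r) by (apply Rle_div_l in Hk; lra).
  rewrite <- Hr3, <- Rpow_mult_distr. apply pow_incr. lra.
Qed.

Lemma sum_cube_sub_cubes_le (A B : R) : 0 <= A -> 0 <= B ->
  (A + B) ^ 3 - A ^ 3 - B ^ 3 <= 3 / 4 * (A + B) ^ 3.
Proof.
  intros HA HB.
  assert (0 <= (A + B) * (A - B) ^ 2) by (apply Rmult_le_pos; [lra | apply pow2_ge_0]).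
  nra.
Qed.

Lemma rotation_of_is_derive (X Y th om : R -> R) (a b : R) :
  (forall t, a <= t <= b -> is_derive X t (- om t * Y t)) ->
  (forall t, a <= t <= b -> is_derive Y t (om t * X t)) ->
  (forall t, a <= t <= b -> is_derive th t (om t)) ->
  th a = 0 ->
  forall t, a <= t <= b ->
    X t = cos (th t) * X a - sin (th t) * Y a /\ Y t = sin (th t) * X a + cos (th t) * Y a.
Proof.
  intros HX HY Hth Ha t Ht.
  assert (Hcos : forall u, a <= u <= b ->
    is_derive (fun v => cos (th v)) u (om u * - sin (th u)))
    by (intros; apply is_derive_Rcomp; [apply is_derive_cos | auto]).
  assert (Hsin : forall u, a <= u <= b ->
    is_derive (fun v => sin (th v)) u (om u * cos (th u)))
    by (intros; apply is_derive_Rcomp; [apply is_derive_sin | auto]).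
  assert (Hp : cos (th t) * X t + sin (th t) * Y t = cos (th a) * X a + sin (th a) * Y a).
  { apply (is_derive_0_eq (fun v => cos (th v) * X v + sin (th v) * Y v)); [lra |].
    intros u Hu. eapply is_derive_eq.
    - apply is_derive_Rplus; apply is_derive_Rmult;
        [apply Hcos | apply HX | apply Hsin | apply HY]; lra.
    - cbv beta. ring. }
  assert (Hq : cos (th t) * Y t - sin (th t) * X t = cos (th a) * Y a - sin (th a) * X a).
  { apply (is_derive_0_eq (fun v => cos (th v) * Y v - sin (th v) * X v)); [lra |].
    intros u Hu. eapply is_derive_eq.
    - apply is_derive_Rminus; apply is_derive_Rmult;
        [apply Hcos | apply HY | apply Hsin | apply HX]; lra.
    - cbv beta. ring. }
  rewrite Ha, cos_0, sin_0 in Hp, Hq.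
  pose proof (sin2_cos2 (th t)) as Hcs. unfold Rsqr in Hcs.
  set (c := cos (th t)) in *. set (s := sin (th t)) in *.
  split.
  - transitivity (c * (c * X t + s * Y t) - s * (c * Y t - s * X t)).
    + transitivity (X t * (s * s + c * c)); [rewrite Hcs | ]; ring.
    + rewrite Hp, Hq. ring.
  - transitivity (s * (c * X t + s * Y t) + c * (c * Y t - s * X t)).
    + transitivity (Y t * (s * s + c * c)); [rewrite Hcs | ]; ring.
    + rewrite Hp, Hq. ring.
Qed.

Section Regular_arc.

Variables (x y : R -> R) (a b : R).
Hypotheses (Hab : a <= b) (Cx : C2 x) (Cy : C2 y)
  (Hreg : forall t, a <= t <= b -> (Derive x t, Derive y t) <> (0, 0)).

Local Notation x' := (Derive x).
Local Notation y' := (Derive y).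
Local Notation x'' := (Derive_n x 2).
Local Notation y'' := (Derive_n y 2).
Local Notation sp := (speed x y).
Local Notation kappa := (curvature x y).

Lemma speed_sqr t : sp t ^ 2 = x' t ^ 2 + y' t ^ 2.
Proof. apply pow2_sqrt. pose proof (pow2_ge_0 (x' t)). pose proof (pow2_ge_0 (y' t)). lra. Qed.

Lemma speed_pos t : a <= t <= b -> 0 < sp t.
Proof.
  intros Ht. apply sqrt_lt_R0.
  destruct (Req_dec (x' t) 0) as [Ex | Ex]; [destruct (Req_dec (y' t) 0) as [Ey | Ey] |].
  - exfalso. apply (Hreg t Ht). now rewrite Ex, Ey.
  - pose proof (Rsqr_pos_lt _ Ey). pose proof (pow2_ge_0 (x' t)). unfold Rsqr in *. nra.
  - pose proof (Rsqr_pos_lt _ Ex). pose proof (pow2_ge_0 (y' t)). unfold Rsqr in *. nra.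
Qed.

Lemma continuous_speed t : continuous sp t.
Proof.
  apply continuous_sqrt_comp.
  apply (continuous_plus (fun u => x' u ^ 2) (fun u => y' u ^ 2));
    apply continuous_pow_comp, C2_continuous_Derive; assumption.
Qed.

Lemma is_derive_speed t : a <= t <= b ->
  is_derive sp t ((x' t * x'' t + y' t * y'' t) / sp t).
Proof.
  intros Ht. pose proof (speed_pos t Ht).
  eapply is_derive_eq.
  - apply (is_derive_sqrt (fun u => x' u ^ 2 + y' u ^ 2)).
    + apply is_derive_Rplus; apply is_derive_pow, C2_is_derive_Derive; assumption.
    + rewrite <- speed_sqr. now apply pow_lt.
  - change (sqrt (x' t ^ 2 + y' t ^ 2)) with (sp t). simpl. field. lra.
Qed.

Lemma curvature_speed t : a <= t <= b ->
  kappa t * sp t = (x' t * y'' t - y' t * x'' t) / sp t ^ 2.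
Proof. intros Ht. pose proof (speed_pos t Ht). unfold curvature. field. lra. Qed.

Lemma continuous_curvature_speed t : a <= t <= b -> continuous (fun u => kappa u * sp u) t.
Proof.
  intros Ht. apply (continuous_mult kappa sp); [| apply continuous_speed].
  apply (continuous_mult (fun u => x' u * y'' u - y' u * x'' u) (fun u => / sp u ^ 3)).
  - apply (continuous_minus (fun u => x' u * y'' u) (fun u => y' u * x'' u)).
    + apply (continuous_mult x' y''); [now apply C2_continuous_Derive | apply (Cy t)].
    + apply (continuous_mult y' x''); [now apply C2_continuous_Derive | apply (Cx t)].
  - apply continuous_Rinv_comp; [apply continuous_pow_comp, continuous_speed |].
    apply pow_nonzero. pose proof (speed_pos t Ht). lra.
Qed.

Definition arclength (t : R) : R := RInt sp a t.

(* Clamping makes the integrand continuous on all of R, so that [tangent_angle] is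
   differentiable at the endpoints of [a, b] as well. *)
Definition tangent_angle (t : R) : R :=
  RInt (fun u => kappa (clamp a b u) * sp (clamp a b u)) a t.

Lemma is_derive_arclength t : is_derive arclength t (sp t).
Proof. apply is_derive_RInt_continuous, continuous_speed. Qed.

Lemma arclength_a : arclength a = 0.
Proof. exact (RInt_point a sp). Qed.

Lemma is_derive_tangent_angle t : a <= t <= b -> is_derive tangent_angle t (kappa t * sp t).
Proof.
  intros Ht. eapply is_derive_eq.
  - apply is_derive_RInt_continuous.
    apply (continuous_clamp_comp (fun u => kappa u * sp u));
      [exact Hab | apply continuous_curvature_speed].
  - now rewrite clamp_id.
Qed.

Lemma tangent_angle_a : tangent_angle a = 0.
Proof. exact (RInt_point a _). Qed.

Lemma tangent_angle_b : tangent_angle b = total_curvature x y a b.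
Proof.
  apply RInt_ext. intros u Hu. rewrite Rmin_left, Rmax_right in Hu by exact Hab.
  now rewrite clamp_id by lra.
Qed.

Lemma is_derive_unit_tangent t : a <= t <= b ->
  is_derive (fun u => x' u / sp u) t (- (kappa t * sp t) * (y' t / sp t)) /\
  is_derive (fun u => y' u / sp u) t (kappa t * sp t * (x' t / sp t)).
Proof.
  intros Ht. pose proof (speed_pos t Ht). pose proof (speed_sqr t) as Hsq.
  rewrite curvature_speed by exact Ht. split.
  - eapply is_derive_eq.
    + apply is_derive_div; [now apply C2_is_derive_Derive | now apply is_derive_speed | lra].
    + apply Rminus_diag_uniq.
      transitivity (x'' t * (sp t ^ 2 - (x' t ^ 2 + y' t ^ 2)) / sp t ^ 3); [field; lra |].
      rewrite Hsq. field. lra.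
  - eapply is_derive_eq.
    + apply is_derive_div; [now apply C2_is_derive_Derive | now apply is_derive_speed | lra].
    + apply Rminus_diag_uniq.
      transitivity (y'' t * (sp t ^ 2 - (x' t ^ 2 + y' t ^ 2)) / sp t ^ 3); [field; lra |].
      rewrite Hsq. field. lra.
Qed.

Lemma det2_tangents u v : a <= u <= b -> a <= v <= b ->
  x' u * y' v - y' u * x' v = sp u * sp v * sin (tangent_angle v - tangent_angle u).
Proof.
  intros Hu Hv.
  assert (Hrot := rotation_of_is_derive (fun t => x' t / sp t) (fun t => y' t / sp t)
    tangent_angle (fun t => kappa t * sp t) a b
    (fun t Ht => proj1 (is_derive_unit_tangent t Ht))
    (fun t Ht => proj2 (is_derive_unit_tangent t Ht))
    is_derive_tangent_angle tangent_angle_a).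
  destruct (Hrot u Hu) as [Xu Yu], (Hrot v Hv) as [Xv Yv]. cbv beta in Xu, Yu, Xv, Yv.
  assert (Ha : a <= a <= b) by lra.
  pose proof (speed_pos u Hu). pose proof (speed_pos v Hv). pose proof (speed_pos a Ha).
  assert (Hunit : (x' a / sp a) ^ 2 + (y' a / sp a) ^ 2 = 1).
  { transitivity ((x' a ^ 2 + y' a ^ 2) / sp a ^ 2); [field; lra |].
    rewrite <- speed_sqr. field. lra. }
  transitivity (sp u * sp v * (x' u / sp u * (y' v / sp v) - y' u / sp u * (x' v / sp v)));
    [field; lra |].
  rewrite Xu, Yu, Xv, Yv, sin_minus.
  transitivity (sp u * sp v * ((sin (tangent_angle v) * cos (tangent_angle u)
    - cos (tangent_angle v) * sin (tangent_angle u)) * ((x' a / sp a) ^ 2 + (y' a / sp a) ^ 2)));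
    [ring | rewrite Hunit; ring].
Qed.

Lemma arclength_le w v : w <= v -> arclength w <= arclength v.
Proof.
  intros Hwv.
  enough (0 - 0 <= arclength v - arclength w) by lra.
  apply (sub_le_sub_of_is_derive (fun _ => 0) (fun _ => 0) arclength sp w v Hwv).
  - intros; apply is_derive_Rconst.
  - intros; apply is_derive_arclength.
  - intros; apply sqrt_pos.
Qed.

Lemma curve_length_nonneg : 0 <= curve_length x y a b.
Proof.
  change (curve_length x y a b) with (arclength b). rewrite <- arclength_a. now apply arclength_le.
Qed.

Section Curvature_bounds.

Variable R1 : R.
Hypotheses (Hk : forall t, a <= t <= b -> 0 < kappa t) (HR1 : 0 < R1)
  (Hrho : forall t, a <= t <= b -> R1 <= / kappa t).

Lemma curvature_le t : a <= t <= b -> kappa t <= / R1.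
Proof.
  intros Ht. rewrite <- (Rinv_inv (kappa t)).
  apply Rinv_le_contravar; [exact HR1 | now apply Hrho].
Qed.

Lemma tangent_angle_lt w v : a <= w -> w < v -> v <= b -> tangent_angle w < tangent_angle v.
Proof.
  intros Hw Hwv Hv.
  destruct (MVT_is_derive tangent_angle (fun t => kappa t * sp t) w v Hwv) as [c [Hc E]].
  - intros; apply is_derive_tangent_angle; lra.
  - pose proof (Hk c ltac:(lra)). pose proof (speed_pos c ltac:(lra)).
    assert (0 < kappa c * sp c * (v - w))
      by (apply Rmult_lt_0_compat; [apply Rmult_lt_0_compat |]; lra).
    lra.
Qed.

Lemma tangent_angle_sub_le w v : a <= w -> w <= v -> v <= b ->
  tangent_angle v - tangent_angle w <= (arclength v - arclength w) / R1.
Proof.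
  intros Hw Hwv Hv.
  replace ((arclength v - arclength w) / R1) with (/ R1 * arclength v - / R1 * arclength w)
    by (field; lra).
  apply (sub_le_sub_of_is_derive tangent_angle (fun t => kappa t * sp t)
    (fun t => / R1 * arclength t) (fun t => / R1 * sp t) w v Hwv).
  - intros; apply is_derive_tangent_angle; lra.
  - intros; apply is_derive_scal, is_derive_arclength.
  - intros t Ht. pose proof (curvature_le t ltac:(lra)).
    pose proof (sqrt_pos (x' t ^ 2 + y' t ^ 2)). now apply Rmult_le_compat_r.
Qed.

Lemma Rabs_det2_tangents_lt w v : a <= w -> w < v -> v <= b ->
  Rabs (x' w * y' v - y' w * x' v) < sp w * sp v * ((arclength v - arclength w) / R1).
Proof.
  intros Hw Hwv Hv. pose proof (speed_pos w ltac:(lra)). pose proof (speed_pos v ltac:(lra)).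
  rewrite det2_tangents, Rabs_mult, (Rabs_right (sp w * sp v)) by (lra || nra).
  apply Rmult_lt_compat_l; [nra |].
  eapply Rlt_le_trans; [apply Rabs_sin_lt | apply tangent_angle_sub_le; lra].
  pose proof (tangent_angle_lt w v Hw Hwv Hv). lra.
Qed.

Lemma chord_tangent_lt t1 t2 v : a <= t1 -> t1 < t2 -> t2 <= v -> v <= b ->
  Rabs ((x t2 - x t1) * y' v - (y t2 - y t1) * x' v) <
  sp v * ((arclength v - arclength t1) ^ 2 - (arclength v - arclength t2) ^ 2) / (2 * R1).
Proof.
  intros H1 H12 H2 Hv.
  pose (f w := (x w - x t2) * y' v - (y w - y t2) * x' v).
  pose (F w := - (sp v / (2 * R1)) * (arclength v - arclength w) ^ 2).
  replace ((x t2 - x t1) * y' v - (y t2 - y t1) * x' v) with (f t2 - f t1) by (unfold f; ring).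
  replace (sp v * _ / (2 * R1)) with (F t2 - F t1) by (unfold F; field; lra).
  apply (Rabs_sub_lt_sub_of_is_derive f (fun w => x' w * y' v - y' w * x' v)
    F (fun w => sp w * sp v * ((arclength v - arclength w) / R1)) t1 t2 H12).
  - intros w _. apply is_derive_affine_det; now apply C2_is_derive.
  - intros w _. eapply is_derive_eq.
    + apply is_derive_scal, is_derive_pow, is_derive_Rminus;
        [apply is_derive_Rconst | apply is_derive_arclength].
    + simpl. field. lra.
  - intros w Hw. apply Rabs_det2_tangents_lt; lra.
Qed.

Lemma triangle_det2_lt t1 t2 t3 : a <= t1 -> t1 < t2 -> t2 < t3 -> t3 <= b ->
  Rabs ((x t2 - x t1) * (y t3 - y t2) - (y t2 - y t1) * (x t3 - x t2)) <
  ((arclength t3 - arclength t1) ^ 3 - (arclength t3 - arclength t2) ^ 3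
     - (arclength t2 - arclength t1) ^ 3) / (6 * R1).
Proof.
  intros H1 H12 H23 H3.
  pose (g v := (y v - y t2) * (x t2 - x t1) - (x v - x t2) * (y t2 - y t1)).
  pose (G v := / (6 * R1) * ((arclength v - arclength t1) ^ 3 - (arclength v - arclength t2) ^ 3)).
  replace ((x t2 - x t1) * _ - _) with (g t3 - g t2) by (unfold g; ring).
  replace (_ / (6 * R1)) with (G t3 - G t2) by (unfold G; field; lra).
  apply (Rabs_sub_lt_sub_of_is_derive g (fun v => y' v * (x t2 - x t1) - x' v * (y t2 - y t1))
    G (fun v => sp v * ((arclength v - arclength t1) ^ 2 - (arclength v - arclength t2) ^ 2)
                  / (2 * R1)) t2 t3 H23).
  - intros v _. apply is_derive_affine_det; now apply C2_is_derive.
  - intros v _. eapply is_derive_eq.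
    + apply is_derive_scal, is_derive_Rminus; apply is_derive_pow, is_derive_Rminus;
        [apply is_derive_arclength | apply is_derive_Rconst | apply is_derive_arclength
        | apply is_derive_Rconst].
    + simpl. field. lra.
  - intros v Hv. replace (y' v * (x t2 - x t1) - x' v * (y t2 - y t1))
      with ((x t2 - x t1) * y' v - (y t2 - y t1) * x' v) by ring.
    apply chord_tangent_lt; lra.
Qed.

Lemma triangle_det2_lt_length t1 t2 t3 : a <= t1 -> t1 < t2 -> t2 < t3 -> t3 <= b ->
  Rabs ((x t2 - x t1) * (y t3 - y t2) - (y t2 - y t1) * (x t3 - x t2)) <
  curve_length x y a b ^ 3 / (8 * R1).
Proof.
  intros H1 H12 H23 H3.
  eapply Rlt_le_trans; [apply triangle_det2_lt; lra |].
  pose proof (arclength_le a t1 H1). pose proof (arclength_le t1 t2 ltac:(lra)).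
  pose proof (arclength_le t2 t3 ltac:(lra)). pose proof (arclength_le t3 b H3).
  rewrite arclength_a in *.
  pose proof (sum_cube_sub_cubes_le (arclength t2 - arclength t1) (arclength t3 - arclength t2)
    ltac:(lra) ltac:(lra)) as Hcubes.
  replace (arclength t2 - arclength t1 + (arclength t3 - arclength t2))
    with (arclength t3 - arclength t1) in Hcubes by ring.
  assert ((arclength t3 - arclength t1) ^ 3 <= curve_length x y a b ^ 3)
    by (apply pow_incr; change (curve_length x y a b) with (arclength b); lra).
  apply (Rle_trans _ (6 / 8 * curve_length x y a b ^ 3 / (6 * R1))).
  - apply Rmult_le_compat_r; [left; apply Rinv_0_lt_compat |]; lra.
  - right. field. lra.
Qed.

Hypothesis Htot : total_curvature x y a b <= PI.

(* The chord from t1 to t2 is parallel to the tangent at some c1 in (t1, t2); if the three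
   points were collinear, it would also be parallel to the tangent at some c2 in (t2, t3),
   but the tangent angle increases by strictly between 0 and PI from c1 to c2. *)
Lemma triangle_det2_neq0 t1 t2 t3 : a <= t1 -> t1 < t2 -> t2 < t3 -> t3 <= b ->
  (x t1, y t1) <> (x t2, y t2) ->
  (x t2 - x t1) * (y t3 - y t2) - (y t2 - y t1) * (x t3 - x t2) <> 0.
Proof.
  intros H1 H12 H23 H3 Hne Hdet.
  set (d := (x t2 - x t1, y t2 - y t1)).
  assert (Hd : d <> (0, 0)).
  { intros E. injection E as Ex Ey. apply Hne. f_equal; lra. }
  pose (f w := det2 (x w - x t1, y w - y t1) d).
  assert (Hf : forall w, is_derive f w (det2 (x' w, y' w) d)).
  { intros w. unfold f, det2; simpl. apply is_derive_affine_det; now apply C2_is_derive. }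
  destruct (MVT_is_derive f _ t1 t2 H12 (fun w _ => Hf w)) as [c1 [Hc1 E1]].
  destruct (MVT_is_derive f _ t2 t3 H23 (fun w _ => Hf w)) as [c2 [Hc2 E2]].
  assert (Z1 : det2 (x' c1, y' c1) d = 0).
  { apply (Rmult_eq_reg_r (t2 - t1)); [| lra]. rewrite <- E1. unfold f, det2, d; simpl. ring. }
  assert (Z2 : det2 (x' c2, y' c2) d = 0).
  { apply (Rmult_eq_reg_r (t3 - t2)); [| lra]. rewrite <- E2. unfold f, det2, d; simpl.
    transitivity (- ((x t2 - x t1) * (y t3 - y t2) - (y t2 - y t1) * (x t3 - x t2)));
      [ring | rewrite Hdet; ring]. }
  pose proof (det2_eq0_of_parallel _ _ _ Hd Z1 Z2) as Z. unfold det2 in Z; simpl in Z.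
  rewrite det2_tangents in Z by lra.
  pose proof (speed_pos c1 ltac:(lra)). pose proof (speed_pos c2 ltac:(lra)).
  pose proof (tangent_angle_lt a c1 ltac:(lra) ltac:(lra) ltac:(lra)).
  pose proof (tangent_angle_lt c1 c2 ltac:(lra) ltac:(lra) ltac:(lra)).
  pose proof (tangent_angle_lt c2 b ltac:(lra) ltac:(lra) ltac:(lra)).
  rewrite tangent_angle_a, tangent_angle_b in *.
  assert (Hsin : 0 < sin (tangent_angle c2 - tangent_angle c1)) by (apply sin_gt_0; lra).
  assert (0 < sp c1 * sp c2 * sin (tangent_angle c2 - tangent_angle c1))
    by (repeat apply Rmult_lt_0_compat; lra).
  lra.
Qed.

Lemma twice_area_curve_bounds s1 s2 s3 :
  a <= s1 <= b -> a <= s2 <= b -> a <= s3 <= b ->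
  (x s1, y s1) <> (x s2, y s2) -> (x s1, y s1) <> (x s3, y s3) ->
  (x s2, y s2) <> (x s3, y s3) ->
  0 < twice_area (x s1, y s1) (x s2, y s2) (x s3, y s3) < curve_length x y a b ^ 3 / (8 * R1).
Proof.
  intros H1 H2 H3 N12 N13 N23.
  assert (Hneq : forall u v, (x u, y u) <> (x v, y v) -> u <> v) by (intros u v N ->; auto).
  pose proof (Hneq _ _ N12) as D12. pose proof (Hneq _ _ N13) as D13.
  pose proof (Hneq _ _ N23) as D23.
  revert H1 H2 H3 N12 N13 N23. pattern s1, s2, s3.
  apply sym3_of_sorted; [| | | assumption ..].
  - intros u v w Huvw Hv Hu Hw Nvu Nvw Nuw.
    rewrite twice_area_swap12. apply Huvw; auto using not_eq_sym.
  - intros u v w Huvw Hu Hw Hv Nuw Nuv Nwv.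
    rewrite twice_area_swap23. apply Huvw; auto using not_eq_sym.
  - intros u v w [Huv Hvw] Hu Hv Hw Nuv _ _. unfold twice_area, det2, vsub; simpl. split.
    + apply Rabs_pos_lt, triangle_det2_neq0; lra || assumption.
    + apply triangle_det2_lt_length; lra.
Qed.

End Curvature_bounds.

End Regular_arc.

Theorem theorem6p1 (x y : R -> R) (a b R1 : R) (v0 v1 v2 : pt) :
  a < b ->
  C2 x -> C2 y ->
  (forall t, a <= t <= b -> (Derive x t, Derive y t) <> (0, 0)) ->
  (forall t, a <= t <= b -> (Derive_n x 2 t, Derive_n y 2 t) <> (0, 0)) ->
  (forall t, a <= t <= b -> 0 < curvature x y t) ->
  on_convex_boundary x y a b ->
  0 < R1 ->
  (forall t, a <= t <= b -> R1 <= / curvature x y t) ->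
  total_curvature x y a b <= PI ->
  det2 v1 v2 <> 0 ->
  curve_length x y a b / Rpower (lattice_invariant v1 v2 * R1) (1 / 3) <= 2 ->
  forall p1 p2 p3 : pt,
    in_lattice v0 v1 v2 p1 -> in_lattice v0 v1 v2 p2 -> in_lattice v0 v1 v2 p3 ->
    (exists t, a <= t <= b /\ p1 = (x t, y t)) ->
    (exists t, a <= t <= b /\ p2 = (x t, y t)) ->
    (exists t, a <= t <= b /\ p3 = (x t, y t)) ->
    p1 = p2 \/ p1 = p3 \/ p2 = p3.
Proof.
  intros Hab Cx Cy Hreg _ Hk _ HR1 Hrho Htot Hdet Hlen p1 p2 p3 L1 L2 L3
    [s1 [Hs1 ->]] [s2 [Hs2 ->]] [s3 [Hs3 ->]].
  apply NNPP. intros Hdistinct.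
  destruct (twice_area_curve_bounds x y a b (Rlt_le _ _ Hab) Cx Cy Hreg R1 Hk HR1 Hrho Htot
    s1 s2 s3 Hs1 Hs2 Hs3) as [Hpos Hlt]; [tauto .. |].
  pose proof (lattice_invariant_le_twice_area v0 v1 v2 _ _ _ L1 L2 L3 Hpos) as Hlattice.
  assert (HA : 0 < lattice_invariant v1 v2) by now apply Rabs_pos_lt.
  pose proof (cube_le_of_div_Rpower_le _ _ _ (Rmult_lt_0_compat _ _ HA HR1)
    (curve_length_nonneg x y a b (Rlt_le _ _ Hab) Cx Cy) Hlen) as Hcube.
  assert (curve_length x y a b ^ 3 / (8 * R1) <= lattice_invariant v1 v2)
    by (apply Rle_div_l; lra).
  lra.
Qed.
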